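(* Let $(\mathcal{F}_\alpha)_{\alpha<\omega_1}$ be a transfinite family and let $\alpha<\beta<\omega_1$ and $\gamma<\omega_1$. Then (a) there is $m\in\mathbb{N}$ with $(\mathcal{F}_\alpha\cap[\{m,m+1,\dots\}]^{<\infty})\sqcup\mathcal{F}_\gamma\subset(\mathcal{F}_\beta\cap[\{m,m+1,\dots\}]^{<\infty})\sqcup\mathcal{F}_\gamma$, and (b) for every infinite $N\subset\mathbb{N}$, $\mathbb{I}(\mathcal{F}_\alpha\sqcup\mathcal{F}_\gamma,N)<\mathbb{I}(\mathcal{F}_\beta\sqcup\mathcal{F}_\gamma,N)$.
   Context: For sets $\mathcal{A},\mathcal{B}$ of finite subsets of $\mathbb{N}$, $\mathcal{A}\sqcup\mathcal{B}=\{A\cup B:A\in\mathcal{A},B\in\mathcal{B}\}$. Transfinite family: given, for each countable limit ordinal $\alpha$, finite sets $A_n(\alpha)\subset[0,\alpha)$ increasing in $n$ with $\max A_n(\alpha)\to\alpha$, set $\mathcal{F}_0=\{\emptyset\}$, $\mathcal{F}_{\beta+1}=\{\{n\}\cup E:n\in\mathbb{N},E\in\mathcal{F}_\beta\}\cup\{\emptyset\}$, and for limit $\alpha$, $\mathcal{F}_\alpha=\{\emptyset\}\cup\{E\ne\emptyset:E\in\bigcup_{\beta\in A_{\min E}(\alpha)}\mathcal{F}_\beta\}$. For $N=\{n_1<n_2<\dots\}$, $\mathcal{F}^N=\{\{n_i:i\in E\}:E\in\mathcal{F}\}$. A hereditary $\mathcal{A}$ is $\alpha$-large on infinite $P$ if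 every infinite $M\subset P$ contains an infinite $N$ with $\mathcal{F}_\alpha^N\subset\mathcal{A}$; $\mathbb{I}(\mathcal{A},P)=\sup\{\alpha<\omega_1:\mathcal{A}\text{ is }\alpha\text{-large on }P\}$. *)

From mathcomp Require Import all_boot.
From mathcomp Require Import finmap.
From Stdlib Require List.

Set Implicit Arguments.
Unset Strict Implicit.
Unset Printing Implicit Defensive.

Local Open Scope fset_scope.

(* Countable ordinals: an abstract strict order [lt] on a type [O]    *)

Section Ordinals.
Variables (O : Type) (lt : O -> O -> Prop).

Definition ole (x y : O) : Prop := lt x y \/ x = y.

Record omega1_like : Prop := Omega1Like {
  o_irrefl : forall x, ~ lt x x;
  o_trans : forall x y z, lt x y -> lt y z -> lt x z;
  o_total : forall x y, lt x y \/ x = y \/ lt y x;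
  o_wf : well_founded lt;
  o_countable_segments : forall b, exists f : O -> nat,
      forall x y, lt x b -> lt y b -> f x = f y -> x = y;
  o_countable_bounded : forall s : nat -> O, exists b, forall n, lt (s n) b
}.

Definition is_zero (a : O) : Prop := forall x, ~ lt x a.
Definition is_succ (b a : O) : Prop := lt b a /\ forall x, lt b x -> ole a x.
Definition is_limit (a : O) : Prop := ~ is_zero a /\ ~ (exists b, is_succ b a).

Record transfinite_family (A : O -> nat -> seq O)
    (F : O -> {fset nat} -> Prop) : Prop := TFamily {
  tf_A_below : forall a, is_limit a -> forall n x, List.In x (A a n) -> lt x a;
  tf_A_incr : forall a, is_limit a -> forall n x,
      List.In x (A a n) -> List.In x (A a n.+1);
  tf_A_nonempty : forall a, is_limit a -> forall n, A a n <> [::];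
  tf_A_max_cvg : forall a, is_limit a -> forall b, lt b a ->
      exists n0, forall n, n0 <= n -> exists x, List.In x (A a n) /\ lt b x;
  tf_zero : forall a, is_zero a -> forall E, F a E <-> E = fset0;
  tf_succ : forall b a, is_succ b a -> forall E,
      F a E <-> (E = fset0 \/ exists (n : nat) E', F b E' /\ E = n |` E');
  tf_limit : forall a, is_limit a -> forall E,
      F a E <-> (E = fset0 \/
        (E <> fset0 /\ exists k, k \in E /\ (forall x, x \in E -> k <= x) /\
           exists b, List.In b (A a k) /\ F b E))
}.

End Ordinals.

Definition fam_join (FA FB : {fset nat} -> Prop) : {fset nat} -> Prop :=
  fun X => exists E1 E2, FA E1 /\ FB E2 /\ X = E1 `|` E2.

Definition fam_above (FA : {fset nat} -> Prop) (m : nat) : {fset nat} -> Prop :=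
  fun E => FA E /\ forall x, x \in E -> m <= x.

Definition fam_sub (FA FB : {fset nat} -> Prop) : Prop := forall E, FA E -> FB E.

(* Infinite subsets of N are represented by their strictly increasing
   enumerations N = {N 0 < N 1 < ...}. *)
Definition strict_incr (N : nat -> nat) : Prop := forall i j, i < j -> N i < N j.

Definition fam_spread (FA : {fset nat} -> Prop) (N : nat -> nat) : {fset nat} -> Prop :=
  fun X => exists E, FA E /\ X = [fset N i | i in E].

Definition infinite_set (P : nat -> Prop) : Prop := forall k, exists n, k <= n /\ P n.

Section Index.
Variables (O : Type) (lt : O -> O -> Prop) (F : O -> {fset nat} -> Prop).

Definition large (a : O) (FA : {fset nat} -> Prop) (P : nat -> Prop) : Prop :=
  forall M : nat -> nat, strict_incr M -> (forall i, P (M i)) ->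
    exists N : nat -> nat, strict_incr N /\ (forall i, exists j, N i = M j) /\
      fam_sub (fam_spread (F a) N) FA.

(* Values of the index live in ω₁ + 1 = option O, None standing for ω₁. *)
Definition ext_lt (x y : option O) : Prop :=
  match x, y with
  | Some a, Some b => lt a b
  | Some _, None => True
  | None, _ => False
  end.
Definition ext_le (x y : option O) : Prop := ext_lt x y \/ x = y.

Definition is_index (FA : {fset nat} -> Prop) (P : nat -> Prop) (x : option O) : Prop :=
  (forall a, large a FA P -> ext_le (Some a) x) /\
  (forall y, (forall a, large a FA P -> ext_le (Some a) y) -> ext_le x y).

End Index.

(* (a) follows by induction on b: each F_c with c < b is contained in F_b on sets above
   some m, through the successor step {n} u E and, at limits, through A_n(b).
   (b) Since F_a and F_g are hereditary and compact, so is their join J, hence the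
   Cantor-Bendixson rank of J is some countable d, and J can only be c-large for c < d.
   Largeness is inherited by smaller ordinals (shift N past the m of (a)) and passes to
   limits (diagonalise along the finitely many b in A_k(l)), so there is a largest l
   for which J is l-large: I(J, N) = l.  Adjoining a point to the F_a-part of a set in
   J = F_a u F_g lands in F_(a+1), which lies in F_b above some m; so F_b u F_g is
   (l+1)-large and I(F_b u F_g, N) > l. *)

From mathcomp Require Import all_boot.
From mathcomp Require Import finmap.
From Stdlib Require Import Classical ClassicalEpsilon.
From Stdlib Require List.

Set Implicit Arguments.
Unset Strict Implicit.
Unset Printing Implicit Defensive.

Section Omega1.
Variables (O : Type) (lt : O -> O -> Prop).
Hypothesis HO : omega1_like lt.

Lemma olt_irrefl x : ~ lt x x. Proof. exact: (o_irrefl HO). Qed.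
Lemma olt_trans x y z : lt x y -> lt y z -> lt x z. Proof. exact: (o_trans HO). Qed.
Lemma olt_total x y : lt x y \/ x = y \/ lt y x. Proof. exact: (o_total HO). Qed.

Lemma olt_asym x y : lt x y -> ~ lt y x.
Proof. by move=> xy yx; apply: (olt_irrefl (olt_trans xy yx)). Qed.

Lemma exists_minimal (P : O -> Prop) : (exists x, P x) ->
  exists x, P x /\ forall y, P y -> ~ lt y x.
Proof.
move=> [x0 Px0]; apply: NNPP => nomin; move: Px0.
elim/(well_founded_ind (o_wf HO)): x0 => x IH Px.
by apply: nomin; exists x; split => // y Py /IH; apply.
Qed.

Lemma ordinal_cases a : is_zero lt a \/ (exists b, is_succ lt b a) \/ is_limit lt a.
Proof.
case: (classic (is_zero lt a)) => [|nz]; first by left.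
case: (classic (exists b, is_succ lt b a)) => [|ns]; first by right; left.
by right; right; split.
Qed.

Lemma exists_succ a : exists s, is_succ lt a s.
Proof.
have [b hb] := o_countable_bounded HO (fun _ => a).
have [s [as_ smin]] := exists_minimal (ex_intro (lt a) b (hb 0)).
exists s; split => // x ax.
case: (olt_total s x) => [|[|xs]]; [by left|by right|].
by case: (smin x ax xs).
Qed.

Lemma olt_succ b s c : is_succ lt b s -> lt c s -> c = b \/ lt c b.
Proof.
move=> [bs smin] cs; case: (olt_total c b) => [|[|bc]]; [by right|by left|].
case: (smin c bc) => [sc|sc]; first by case: (olt_asym cs sc).
by rewrite sc in cs; case: (olt_irrefl cs).
Qed.

Definition is_sup (S : O -> Prop) (x : option O) :=
  (forall a, S a -> ext_le lt (Some a) x) /\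
  (forall y, (forall a, S a -> ext_le lt (Some a) y) -> ext_le lt x y).

Lemma ext_le_Some a b : ext_le lt (Some a) (Some b) <-> ole lt a b.
Proof. by split=> [[|[->]]|[|->]]; [left|right|left|right]. Qed.

Lemma exists_sup (S : O -> Prop) : exists x, is_sup S x.
Proof.
case: (classic (exists c, forall a, S a -> ole lt a c)) => [bounded|unbounded].
  have [l [lub lmin]] := exists_minimal bounded.
  exists (Some l); split=> [a /lub /ext_le_Some //|[y|] ub]; last by left.
  apply/ext_le_Some; case: (olt_total l y) => [|[|yl]]; [by left|by right|].
  by case: (lmin y (fun a Sa => proj1 (ext_le_Some a y) (ub a Sa)) yl).
exists None; split=> [a _|[y|] ub]; [by left| |by right].
by case: unbounded; exists y => a /ub /ext_le_Some.
Qed.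

Lemma sup_lt_succ S T x y l s : is_sup S x -> is_sup T y ->
  (forall a, S a -> ole lt a l) -> is_succ lt l s -> T s -> ext_lt lt x y.
Proof.
move=> [_ xmin] [yub _] Sl [ls _] Ts.
have := yub s Ts; have : ext_le lt x (Some l) by apply: xmin => a /Sl /ext_le_Some.
case: x {xmin} => [x|]; last by case=> [|].
case: y {yub} => [y|] //= /ext_le_Some xl /ext_le_Some sy.
have xs : lt x s by case: xl => [xl|->] //; apply: olt_trans xl ls.
by case: sy => [|<-] //; apply: olt_trans.
Qed.

End Omega1.

Lemma dependent_choice (T : Type) (P : nat -> T -> Prop) (R : nat -> T -> T -> Prop) x0 :
  P 0 x0 -> (forall k x, P k x -> exists y, P k.+1 y /\ R k x y) ->
  exists s : nat -> T, s 0 = x0 /\ forall k, P k (s k) /\ R k (s k) (s k.+1).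
Proof.
move=> P0 hstep; pose Q k x y := P k x -> P k.+1 y /\ R k x y.
have [step hQ] : exists step : nat * T -> T, forall p, Q p.1 p.2 (step p).
  apply: (choice (fun p => Q p.1 p.2)) => -[k x].
  by case: (classic (P k x)) => [/hstep [y hy]|nP]; [exists y|exists x].
pose s := nat_rect (fun _ => T) x0 (fun k x => step (k, x)).
have Ps k : P k (s k) by elim: k => // k IH; apply: (proj1 (hQ (k, _) IH)).
by exists s; split=> // k; split=> //; apply: (proj2 (hQ (k, _) (Ps k))).
Qed.

Lemma strict_incrS N : (forall i, N i < N i.+1) -> strict_incr N.
Proof.
move=> hN i j; elim: j => // j IH; rewrite ltnS leq_eqVlt => /orP [/eqP -> //|].
by move/IH/ltn_trans; apply.
Qed.

Lemma strict_incr_leq N : strict_incr N -> forall i j, i <= j -> N i <= N j.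
Proof. by move=> hN i j; rewrite leq_eqVlt => /orP [/eqP -> //|/hN/ltnW]. Qed.

Lemma strict_incr_geq N : strict_incr N -> forall i, i <= N i.
Proof. by move=> hN; elim=> // i IH; apply: leq_ltn_trans IH (hN _ _ (ltnSn i)). Qed.

Lemma strict_incr_lt_inv N : strict_incr N -> forall i j, N i < N j -> i < j.
Proof.
move=> hN i j; apply: contraTT; rewrite -!leqNgt; exact: strict_incr_leq.
Qed.

Lemma strict_incr_shift N m : strict_incr N -> strict_incr (fun i => N (i + m)).
Proof. by move=> hN i j ij; apply: hN; rewrite ltn_add2r. Qed.

Lemma strict_incr_addn m : strict_incr (addn^~ m).
Proof. exact: (@strict_incr_shift id). Qed.

Lemma infinite_set_enum X : infinite_set X ->
  exists e, strict_incr e /\ forall i, X (e i).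
Proof.
move=> /choice [next hnext].
exists (nat_rect (fun _ => nat) (next 0) (fun _ p => next p.+1)); split.
  by apply: strict_incrS => i /=; apply: (proj1 (hnext _)).
by case=> [|i] /=; apply: (proj2 (hnext _)).
Qed.

Lemma infinite_set_above X m : infinite_set X -> infinite_set (fun x => m <= x /\ X x).
Proof.
move=> hX k; have [n [kmn Xn]] := hX (maxn k m).
by exists n; rewrite !(leq_trans _ kmn) ?leq_maxl ?leq_maxr.
Qed.

Lemma infinite_set_or X Y Z : infinite_set X -> (forall x, X x -> Y x \/ Z x) ->
  infinite_set Y \/ infinite_set Z.
Proof.
move=> hX XYZ; apply: NNPP => /not_or_and [nY nZ].
have bound W : ~ infinite_set W -> exists K, forall n, K <= n -> ~ W n.
  move=> nW; apply: NNPP => h; apply: nW => k; apply: NNPP => nk; apply: h.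
  by exists k => n kn Wn; apply: nk; exists n.
have [[KY hY] [KZ hZ]] := (bound _ nY, bound _ nZ).
have [n [Kn Xn]] := hX (maxn KY KZ).
by case: (XYZ n Xn); [apply: hY|apply: hZ]; rewrite (leq_trans _ Kn) ?leq_maxl ?leq_maxr.
Qed.

Definition subseq_of (N M : nat -> nat) :=
  exists t, strict_incr t /\ forall i, N i = M (t i).

Lemma subseq_of_range N M : strict_incr N -> strict_incr M ->
  (forall i, exists j, N i = M j) -> subseq_of N M.
Proof.
move=> hN hM /choice [t ht].
by exists t; split => // i j ij; apply: (strict_incr_lt_inv hM); rewrite -!ht; apply: hN.
Qed.

Lemma subseq_of_refl M : subseq_of M M.
Proof. by exists id; split. Qed.

Lemma subseq_of_trans N Q M : subseq_of N Q -> subseq_of Q M -> subseq_of N M.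
Proof.
move=> [t1 [ht1 e1]] [t2 [ht2 e2]]; exists (t2 \o t1); split => [i j ij|i].
  exact/ht2/ht1.
by rewrite e1 e2.
Qed.

Lemma subseq_of_strict_incr N M : subseq_of N M -> strict_incr M -> strict_incr N.
Proof. by move=> [t [ht e]] hM i j ij; rewrite !e; apply/hM/ht. Qed.

Lemma subseq_of_mem N M : subseq_of N M -> forall i, exists j, N i = M j.
Proof. by move=> [t [_ e]] i; exists (t i). Qed.

Lemma subseq_of_chain (Ns : nat -> nat -> nat) :
  (forall k, subseq_of (Ns k.+1) (Ns k)) -> forall k j, k <= j -> subseq_of (Ns j) (Ns k).
Proof.
move=> hnest k; elim=> [|j IH]; first by rewrite leqn0 => /eqP ->; apply: subseq_of_refl.
rewrite leq_eqVlt => /orP [/eqP ->|]; first exact: subseq_of_refl.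
by rewrite ltnS => /IH; apply: subseq_of_trans.
Qed.

Lemma diagonal_subseq (Ns : nat -> nat -> nat) :
  (forall k, strict_incr (Ns k)) -> (forall k, subseq_of (Ns k.+1) (Ns k)) ->
  strict_incr (fun i => Ns i i) /\ forall k, exists s, strict_incr s /\
    forall i, k <= i -> Ns k (s i) = Ns i i.
Proof.
move=> hsi hnest; have hchain := subseq_of_chain hnest.
have hD : strict_incr (fun i => Ns i i).
  apply: strict_incrS => i; have [t [ht ->]] := hnest i.
  by apply/hsi/(leq_trans (ltnSn i))/strict_incr_geq.
split=> // k.
have [u hu] : exists u, forall i, k <= i -> Ns k (u i) = Ns i i.
  apply: (choice (fun i j => k <= i -> Ns k j = Ns i i)) => i.
  by case: (leqP k i) => [/hchain [t [_ e]]|_]; [exists (t i); rewrite e|exists 0].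
have huk i : k <= i -> k <= u i.
  move=> ki; rewrite leqNgt; apply/negP => /(hsi k).
  by rewrite hu // ltnNge (strict_incr_leq hD ki).
exists (fun i => if i < k then i else u i); split=> [i j /= ij|i ki /=]; last first.
  by rewrite ltnNge ki hu.
case: (ltnP j k) => [jk|kj]; first by rewrite (ltn_trans ij jk).
case: (ltnP i k) => [ik|ki]; first exact: leq_trans ik (huk j kj).
by apply: (strict_incr_lt_inv (hsi k)); rewrite !hu //; apply: hD.
Qed.

Local Open Scope fset_scope.

Lemma fset_min (E : {fset nat}) : E <> fset0 ->
  exists k, k \in E /\ forall x, x \in E -> k <= x.
Proof.
move=> /eqP /fset0Pn hE; exists (ex_minn hE).
by case: ex_minnP => m mE mmin; split=> // x /mmin.
Qed.

Lemma fset_bound (E : {fset nat}) : exists B, forall x, x \in E -> x <= B.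
Proof. by exists (\max_(y <- E) y) => x xE; apply: (@leq_bigmax_seq _ _ xpredT). Qed.

Lemma imfset_subseq (N M t : nat -> nat) (E : {fset nat}) :
  (forall i, i \in E -> N i = M (t i)) ->
  [fset N i | i in E] = [fset M i | i in [fset t i | i in E]].
Proof. by move=> NMt; rewrite -imfset_comp; apply: eq_in_imfset. Qed.

Definition initial_segment (e : nat -> nat) k := [fset e i | i in iota 0 k].

Lemma initial_segmentS e k : initial_segment e k.+1 = e k |` initial_segment e k.
Proof.
apply/fsetP => x; apply/imfsetP/fset1UP => [[i]|[->|/imfsetP [i ik ->]]].
- rewrite mem_iota /= add0n ltnS leq_eqVlt => /orP [/eqP ->|ik ->]; first by left.
  by right; apply: in_imfset; rewrite /= mem_iota.
- by exists k; rewrite // mem_iota add0n leqnn.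
- exists i => //; move: ik; rewrite !mem_iota /= !add0n ltnS; exact: ltnW.
Qed.

Lemma initial_segment_choice (U : {fset nat} -> Prop) :
  U fset0 -> (forall E k, U E -> exists n, k <= n /\ U (n |` E)) ->
  exists e, strict_incr e /\ forall k, U (initial_segment e k).
Proof.
move=> U0 hU.
pose P (_ : nat) (p : {fset nat} * nat) :=
  [/\ U p.1, U (p.2 |` p.1) & forall x, x \in p.1 -> x < p.2].
have [n0 [_ U1]] := hU _ 0 U0.
have P0 : P 0 (fset0, n0) by split=> // x; rewrite in_fset0.
have step k p : P k p -> exists q, P k.+1 q /\ q.1 = p.2 |` p.1.
  case: p => E n [UE Un En]; have [m [nm Um]] := hU _ n.+1 Un.
  exists (n |` E, m); split=> //; split=> // x /fset1UP [->|/En xn] //.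
  exact: ltn_trans xn nm.
have [s [s0 hs]] := dependent_choice P0 step.
pose e k := (s k).2.
have seg k : (s k).1 = initial_segment e k.
  elim: k => [|k IH].
    by rewrite s0; apply/fsetP => x; rewrite in_fset0; apply/esym/imfsetP => -[].
  by have [_ ->] := hs k; rewrite initial_segmentS IH.
have he : strict_incr e.
  apply: strict_incrS => k; have [[_ _ lt1] e1] := ((hs k.+1).1, (hs k).2).
  by apply: lt1; rewrite e1 fset1U1.
by exists e; split=> // k; rewrite -seg; have [[]] := hs k.
Qed.

Definition hereditary (FA : {fset nat} -> Prop) :=
  forall E E', FA E -> E' `<=` E -> FA E'.

Definition compact (FA : {fset nat} -> Prop) := forall X, infinite_set X ->
  exists E, (forall x, x \in E -> X x) /\ ~ FA E.

Lemma hereditary_join FA FB : hereditary FA -> hereditary FB ->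
  hereditary (fam_join FA FB).
Proof.
move=> hA hB E E' [E1 [E2 [h1 [h2 ->]]]] sub.
exists (E' `&` E1), (E' `&` E2); split; first by apply: hA h1 _; apply: fsubsetIr.
split; first by apply: hB h2 _; apply: fsubsetIr.
by rewrite -fsetIUr; apply/esym/fsetIidPl.
Qed.

Lemma infinite_set_range e : strict_incr e -> infinite_set (fun x => exists i, x = e i).
Proof. by move=> he k; exists (e k); split; [apply: strict_incr_geq|exists k]. Qed.

Lemma compact_initial_segment FA e : hereditary FA -> compact FA ->
  strict_incr e -> exists k, ~ FA (initial_segment e k).
Proof.
move=> hA cA he.
have [E [Ee nE]] := cA _ (infinite_set_range he).
have [B hB] := fset_bound E; exists B.+1 => seg; apply/nE/(hA _ _ seg).
apply/fsubsetP => x xE; have [i ei] := Ee x xE; rewrite ei; apply: in_imfset.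
by rewrite mem_iota /= add0n ltnS (leq_trans (strict_incr_geq he i)) // -ei hB.
Qed.

Definition extendable (c : nat -> nat -> bool) (f : nat -> bool) K :=
  forall K', exists k, K' <= k /\ forall i, i < K -> f i = c k i.

Lemma extendable_step c f K : extendable c f K ->
  exists b, extendable c (fun i => if i == K then b else f i) K.+1.
Proof.
move=> hf; apply: NNPP => nb.
have stuck b : exists K', forall k, K' <= k ->
    ~ forall i, i < K.+1 -> (if i == K then b else f i) = c k i.
  apply: NNPP => h; apply: nb; exists b => K'; apply: NNPP => h'; apply: h.
  by exists K' => k K'k agree; apply: h'; exists k.
have [[K1 h1] [K2 h2]] := (stuck true, stuck false).
have [k [Kk agree]] := hf (maxn K1 K2).
have ext i : i < K.+1 -> (if i == K then c k K else f i) = c k i.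
  by rewrite ltnS leq_eqVlt => /orP [/eqP ->|iK]; rewrite ?eqxx // (ltn_eqF iK) agree.
case ck: (c k K) ext => ext.
  by apply: (h1 k) ext; rewrite (leq_trans _ Kk) ?leq_maxl.
by apply: (h2 k) ext; rewrite (leq_trans _ Kk) ?leq_maxr.
Qed.

Lemma weak_koenig (c : nat -> nat -> bool) : exists f, forall K, extendable c f K.
Proof.
have start : extendable c (fun _ => false) 0 by move=> K'; exists K'.
have step K f : extendable c f K ->
    exists g, extendable c g K.+1 /\ forall i, i < K -> g i = f i.
  move=> /extendable_step [b hb]; exists (fun i => if i == K then b else f i).
  by split=> // i iK; rewrite (ltn_eqF iK).
have [s [_ hs]] := dependent_choice start step.
have stable K i : i < K -> s K i = s i.+1 i.
  elim: K => // K IH; rewrite ltnS leq_eqVlt => /orP [/eqP -> //|iK].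
  by rewrite (proj2 (hs K)) // IH.
exists (fun i => s i.+1 i) => K K'; have [k [Kk agree]] := (proj1 (hs K)) K'.
by exists k; split=> // i iK; rewrite -(stable K) // agree.
Qed.

(* Split every initial segment of X into an FA-part and an FB-part; Koenig's lemma turns
   these splittings into one 2-colouring of X, and an infinite colour class contains a
   finite set outside its family. *)
Lemma compact_join FA FB : hereditary FA -> hereditary FB -> compact FA -> compact FB ->
  compact (fam_join FA FB).
Proof.
move=> hA hB cA cB X hX; apply: NNPP => noE.
have [e [he Xe]] := infinite_set_enum hX.
have [pr hpr] : exists pr : nat -> {fset nat} * {fset nat}, forall k,
    [/\ FA (pr k).1, FB (pr k).2 & initial_segment e k = (pr k).1 `|` (pr k).2].
  apply: (choice (fun k p => [/\ FA p.1, FB p.2 & initial_segment e k = p.1 `|` p.2])).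
  move=> k; have : fam_join FA FB (initial_segment e k).
    apply: NNPP => nJ; apply: noE; exists (initial_segment e k).
    by split=> // x /imfsetP [i _ ->].
  by move=> [E1 [E2 [h1 [h2 h]]]]; exists (E1, E2).
have [f hf] := weak_koenig (fun k i => e i \in (pr k).1).
have side (bb : bool) E : (forall x, x \in E -> exists i, x = e i /\ f i = bb) ->
    exists k, E `<=` (if bb then (pr k).1 else (pr k).2).
  move=> hE; have [B EB] := fset_bound E; have [k [Bk agree]] := hf B.+1 B.+1.
  exists k; apply/fsubsetP => x xE; have [i [ei fi]] := hE x xE.
  have iB : i < B.+1 by rewrite ltnS (leq_trans (strict_incr_geq he i)) // -ei EB.
  have : e i \in initial_segment e k.
    by apply: in_imfset; rewrite mem_iota /= add0n (leq_trans iB Bk).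
  have [_ _ ->] := hpr k; move: (agree i iB); rewrite fi ei in_fsetU.
  by case: bb {hE fi} => <-.
have cover x : (exists i, x = e i) ->
    (exists i, x = e i /\ f i = true) \/ (exists i, x = e i /\ f i = false).
  by move=> [i ->]; case fi: (f i); [left|right]; exists i.
have [Y|Y] := infinite_set_or (infinite_set_range he) cover.
- have [E [EY nE]] := cA _ Y; have [k sub] := side true E EY.
  by case: (hpr k) => hk _ _; apply/nE/(hA _ _ hk).
- have [E [EY nE]] := cB _ Y; have [k sub] := side false E EY.
  by case: (hpr k) => _ hk _; apply/nE/(hB _ _ hk).
Qed.

Section Rank.
Variables (O : Type) (lt : O -> O -> Prop).
Hypothesis HO : omega1_like lt.

(* The Cantor-Bendixson rank of the tree [FA] at the node [E] is at least [d]. *)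
Inductive rank_ge (FA : {fset nat} -> Prop) : {fset nat} -> O -> Prop :=
| RankGe E d : FA E ->
    (forall d', lt d' d -> forall k, exists n, k <= n /\ rank_ge FA (n |` E) d') ->
    rank_ge FA E d.

Lemma rank_ge_mem FA E d : rank_ge FA E d -> FA E.
Proof. by case. Qed.

Lemma rank_ge_extend FA E d : rank_ge FA E d -> forall d', lt d' d ->
  forall k, exists n, k <= n /\ rank_ge FA (n |` E) d'.
Proof. by case. Qed.

Lemma rank_ge_le FA E d d' : rank_ge FA E d -> ole lt d' d -> rank_ge FA E d'.
Proof.
case=> {}E {}d FE ext [d'd|->]; last exact: RankGe.
by apply: RankGe => // d'' d''d'; apply/ext/(olt_trans HO d''d').
Qed.

Lemma rank_ge_sub FA FB E d : fam_sub FA FB -> rank_ge FA E d -> rank_ge FB E d.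
Proof.
move=> AB; elim/(well_founded_ind (o_wf HO)): d E => d IH E rE.
apply: RankGe => [|d' d'd k]; first exact/AB/(rank_ge_mem rE).
by have [n [kn rn]] := rank_ge_extend rE d'd k; exists n; split=> //; apply: IH.
Qed.

Lemma rank_ge_union FB D E d :
  rank_ge (fun X => FB (D `|` X)) E d -> rank_ge FB (D `|` E) d.
Proof.
elim/(well_founded_ind (o_wf HO)): d E => d IH E rE.
apply: RankGe => [|d' d'd k]; first exact: (rank_ge_mem rE).
have [n [kn rn]] := rank_ge_extend rE d'd k.
by exists n; split=> //; rewrite fsetUCA; apply: IH.
Qed.

Lemma rank_unbounded_extend FA E : (forall d, rank_ge FA E d) ->
  forall k, exists n, k <= n /\ forall d, rank_ge FA (n |` E) d.
Proof.
move=> rE k; apply: NNPP => noext.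
have [s hs] : exists s : nat -> O, forall i, ~ rank_ge FA ((i + k)%N |` E) (s i).
  apply: (choice (fun i d => ~ rank_ge FA ((i + k)%N |` E) d)) => i.
  apply: NNPP => h; apply: noext; exists (i + k)%N.
  by split=> [|d]; [apply: leq_addl|apply: NNPP => nd; apply: h; exists d].
(* [c] bounds the countably many [s i]; a child of rank >= [c] < [c'] refutes them all. *)
have [c hc] := o_countable_bounded HO s; have [c' hc'] := o_countable_bounded HO (fun=> c).
have [n [kn rn]] := rank_ge_extend (rE c') (hc' 0) k.
by apply: (hs (n - k)); rewrite subnK //; apply: rank_ge_le rn _; left.
Qed.

(* [d0] only witnesses that [O] is inhabited. *)
Lemma rank_bounded FA (d0 : O) : hereditary FA -> compact FA ->
  exists d, ~ rank_ge FA fset0 d.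
Proof.
move=> hA cA; apply: NNPP => unbounded.
pose U E := forall d, rank_ge FA E d.
have U0 : U fset0 by move=> d; apply: NNPP => nr; apply: unbounded; exists d.
have [e [he Ue]] := initial_segment_choice U0 (fun E k UE => rank_unbounded_extend UE k).
have [k nk] := compact_initial_segment hA cA he.
exact/nk/(rank_ge_mem (Ue k d0)).
Qed.

End Rank.

Section TransfiniteFamily.
Variables (O : Type) (lt : O -> O -> Prop).
Hypothesis HO : omega1_like lt.
Variables (A : O -> nat -> seq O) (F : O -> {fset nat} -> Prop).
Hypothesis HF : transfinite_family lt A F.

Lemma A_monotone a : is_limit lt a -> forall n m x, n <= m ->
  List.In x (A a n) -> List.In x (A a m).
Proof.
move=> la n m x; elim: m => [|m IH]; first by rewrite leqn0 => /eqP ->.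
by rewrite leq_eqVlt => /orP [/eqP -> //|/IH hx /hx /(tf_A_incr HF la)].
Qed.

Lemma F_nil a : F a fset0.
Proof.
case: (ordinal_cases lt a) => [z|[[b sb]|l]].
- exact/(tf_zero HF z).
- by apply/(tf_succ HF sb); left.
- by apply/(tf_limit HF l); left.
Qed.

Lemma F_tail_subset_limit l n b E : is_limit lt l -> List.In b (A l n) -> F b E ->
  (forall x, x \in E -> n <= x) -> F l E.
Proof.
move=> ll hb Fb En; apply/(tf_limit HF ll).
case: (fset_0Vmem E) => [->|[y yE]]; first by left.
have nE : E <> fset0 by move=> E0; rewrite E0 in yE.
have [k [kE kmin]] := fset_min nE; right; split=> //.
by exists k; do 2!split=> //; exists b; split=> //; apply: (A_monotone ll (En k kE) hb).
Qed.

Lemma F_subset_succ b s E : is_succ lt b s -> F b E -> F s E.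
Proof.
move=> sb FE; apply/(tf_succ HF sb).
case: (fset_0Vmem E) => [->|[y yE]]; first by left.
by right; exists y, E; split=> //; apply/esym/fsetUidPr; rewrite fsub1set.
Qed.

Lemma F_hereditary {a} : hereditary (F a).
Proof.
elim/(well_founded_ind (o_wf HO)): a => a IH E E' FE sub.
case: (ordinal_cases lt a) => [z|[[b sb]|l]].
- by move/(tf_zero HF z): FE sub => ->; rewrite fsubset0 => /eqP ->; apply: F_nil.
- move/(tf_succ HF sb): FE sub => [->|[n [E2 [FE2 ->]]]] sub.
    by move: sub; rewrite fsubset0 => /eqP ->; apply: F_nil.
  have subD : E' `\ n `<=` E2.
    apply/fsubsetP => x /fsetD1P [xn /(fsubsetP sub) /fset1UP [/eqP|] //].
    by rewrite (negbTE xn).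
  case: (boolP (n \in E')) => [nE'|nE'].
    apply/(tf_succ HF sb); right; exists n, (E' `\ n); rewrite fsetD1K //.
    by split=> //; apply: (IH b (proj1 sb) E2).
  apply: (F_subset_succ sb); apply: (IH b (proj1 sb) E2) => //.
  by rewrite -(mem_fsetD1 nE').
- move/(tf_limit HF l): FE => [E0|[_ [k [_ [kmin [c [hc Fc]]]]]]].
    by move: sub; rewrite E0 fsubset0 => /eqP ->; apply: F_nil.
  apply: (F_tail_subset_limit l hc); first exact: (IH c (tf_A_below HF l hc) E).
  by move=> x /(fsubsetP sub) /kmin.
Qed.

Lemma F_spread a E N : strict_incr N -> F a E -> F a [fset N i | i in E].
Proof.
move=> hN; elim/(well_founded_ind (o_wf HO)): a E => a IH E FE.
case: (ordinal_cases lt a) => [z|[[b sb]|l]].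
- by move/(tf_zero HF z): FE => ->; rewrite imfset0; apply: F_nil.
- move/(tf_succ HF sb): FE => [->|[n [E2 [FE2 ->]]]].
    by rewrite imfset0; apply: F_nil.
  apply/(tf_succ HF sb); right; exists (N n), [fset N i | i in E2].
  by rewrite imfsetU1; split=> //; apply: (IH b (proj1 sb)).
- move/(tf_limit HF l): FE => [->|[_ [k [_ [kmin [c [hc Fc]]]]]]].
    by rewrite imfset0; apply: F_nil.
  apply: (F_tail_subset_limit l hc); first exact: (IH c (tf_A_below HF l hc)).
  move=> _ /imfsetP [i /= /kmin ki ->].
  exact: leq_trans ki (strict_incr_geq hN i).
Qed.

Lemma F_spread_subseq a Q N : subseq_of Q N ->
  fam_sub (fam_spread (F a) Q) (fam_spread (F a) N).
Proof.
move=> [t [ht e]] _ [E [FE ->]]; exists [fset t i | i in E].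
by split; [apply: F_spread|apply: imfset_subseq].
Qed.

Lemma F_tail_subset a b : lt a b -> exists m, forall E, F a E ->
  (forall x, x \in E -> m <= x) -> F b E.
Proof.
elim/(well_founded_ind (o_wf HO)): b a => b IH a ab.
case: (ordinal_cases lt b) => [z|[[c sc]|l]].
- by case: (z a).
- case: (olt_succ HO sc ab) => [->|ac]; first by exists 0 => E /(F_subset_succ sc).
  have [m hm] := IH c (proj1 sc) a ac.
  by exists m => E FE Em; apply/(F_subset_succ sc)/hm.
- have [n0 hn0] := tf_A_max_cvg HF l ab.
  have [x [hx ax]] := hn0 n0 (leqnn _).
  have [m hm] := IH x (tf_A_below HF l hx) a ax.
  exists (maxn n0 m) => E FE Em; apply: (F_tail_subset_limit l hx) => [|y /Em]; last first.
    by apply: leq_trans; apply: leq_maxl.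
  by apply: hm => // y /Em; apply: leq_trans; apply: leq_maxr.
Qed.


Lemma F_succ_tail_subset a b s : lt a b -> is_succ lt a s -> exists m, forall E,
  F s E -> (forall x, x \in E -> m <= x) -> F b E.
Proof.
move=> ab sa; case: (olt_total HO s b) => [sb|[<-|bs]]; first exact: F_tail_subset.
  by exists 0.
case: (olt_succ HO sa bs) => [ba|ba]; first by rewrite ba in ab; case: (olt_irrefl HO ab).
by case: (olt_asym HO ab ba).
Qed.


Lemma F_spread_shift c a m N :
  (forall E, F c E -> (forall x, x \in E -> m <= x) -> F a E) -> strict_incr N ->
  fam_sub (fam_spread (F c) (fun i => N (i + m)%N)) (fam_spread (F a) N).
Proof.
move=> hm hN _ [E [FE ->]]; exists [fset (i + m)%N | i in E]; split.
  apply: hm => [|_ /imfsetP [i _ ->]]; last exact: leq_addl.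
  exact: F_spread (strict_incr_addn m) FE.
exact: imfset_subseq.
Qed.

Lemma F_compact_succ c s : is_succ lt c s -> compact (F c) -> compact (F s).
Proof.
move=> sc cc X hX.
have [E1 [E1X nE1]] := cc X hX; have [B E1B] := fset_bound E1.
have [E2 [E2X nE2]] := cc _ (infinite_set_above B.+1 hX).
exists (E1 `|` E2); split=> [x /fsetUP [/E1X|/E2X []] //|].
move/(tf_succ HF sc) => [E0|[n [E' [FE' E12]]]].
  by apply: nE1; move: (fsubsetUl E1 E2); rewrite E0 fsubset0 => /eqP ->; apply: F_nil.
have sub D : D `<=` E1 `|` E2 -> n \notin D -> D `<=` E'.
  move=> DE nD; apply/fsubsetP => x xD; move: (fsubsetP DE x xD).
  by rewrite E12 => /fset1UP [xn|//]; rewrite -xn xD in nD.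
case: (boolP (n \in E1)) => nE1'; last exact/nE1/(F_hereditary FE')/sub/nE1'/fsubsetUl.
apply/nE2/(F_hereditary FE')/sub; first exact: fsubsetUr.
by apply/negP => /E2X [Bn _]; move: (E1B n nE1'); rewrite leqNgt Bn.
Qed.

Lemma F_avoid_list (L : seq O) X : (forall b, List.In b L -> compact (F b)) ->
  infinite_set X ->
  exists E, (forall x, x \in E -> X x) /\ forall b, List.In b L -> ~ F b E.
Proof.
move=> cL hX; elim: L cL => [|b L IH] cL; first by exists fset0.
have [EL [ELX nEL]] := IH (fun c hc => cL c (or_intror hc)).
have [Eb [EbX nEb]] := cL b (or_introl erefl) X hX.
exists (EL `|` Eb); split=> [x /fsetUP [/ELX|/EbX] //|c [<-|hc] Fc].
  exact/nEb/(F_hereditary Fc)/fsubsetUr.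
exact/(nEL c hc)/(F_hereditary Fc)/fsubsetUl.
Qed.

Lemma F_compact_limit a : is_limit lt a -> (forall b, lt b a -> compact (F b)) ->
  compact (F a).
Proof.
move=> la IH X hX; have [x0 [_ Xx0]] := hX 0.
have [E [EX nE]] := F_avoid_list (L := A a x0)
  (fun b hb => IH b (tf_A_below HF la hb)) (infinite_set_above x0 hX).
exists (x0 |` E); split=> [x /fset1UP [->|/EX []] //|].
move/(tf_limit HF la) => [E0|[_ [k [kE [kmin [b [hb Fb]]]]]]].
  by move: (fset1U1 x0 E); rewrite E0 in_fset0.
have k0 : k = x0.
  apply/eqP; rewrite eqn_leq kmin ?fset1U1 //=.
  by case/fset1UP: kE => [->|/EX [] //].
by apply: (nE b); [rewrite -k0|apply/(F_hereditary Fb)/fsubsetU1].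
Qed.

Lemma F_compact a : compact (F a).
Proof.
elim/(well_founded_ind (o_wf HO)): a => a IH.
case: (ordinal_cases lt a) => [z|[[c sc]|l]]; last exact: F_compact_limit.
- move=> X hX; have [x [_ Xx]] := hX 0.
  exists [fset x]; split=> [y /fset1P -> //|/(tf_zero HF z) E0].
  by move: (fset11 x); rewrite E0 in_fset0.
- exact/(F_compact_succ sc)/IH/(proj1 sc).
Qed.

Lemma large_zero z FA P : is_zero lt z -> FA fset0 -> large F z FA P.
Proof.
move=> hz FA0 M hM PM; exists M; do 2!split=> //; first by move=> i; exists i.
by move=> _ [E [/(tf_zero HF hz) -> ->]]; rewrite imfset0.
Qed.

Lemma large_lt a c FA P : large F a FA P -> lt c a -> large F c FA P.
Proof.
move=> la ca M hM PM; have [N [hN [NM sub]]] := la M hM PM.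
have [m hm] := F_tail_subset ca.
exists (fun i => N (i + m)%N); split; first exact: strict_incr_shift.
by split=> [i|X /(F_spread_shift hm hN) /sub //]; apply: NM.
Qed.

Lemma large_refine FA P M (L : seq O) : (forall b, List.In b L -> large F b FA P) ->
  strict_incr M -> (forall i, P (M i)) -> forall Q, subseq_of Q M ->
  exists Q', subseq_of Q' Q /\ forall b, List.In b L -> fam_sub (fam_spread (F b) Q') FA.
Proof.
move=> lL hM PM; elim: L lL => [|b L IH] lL Q QM.
  by exists Q; split=> //; apply: subseq_of_refl.
have [Q1 [Q1Q sub1]] := IH (fun c hc => lL c (or_intror hc)) Q QM.
have Q1M := subseq_of_trans Q1Q QM; have hQ1 := subseq_of_strict_incr Q1M hM.
have PQ1 i : P (Q1 i) by have [j ->] := subseq_of_mem Q1M i.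
have [Q2 [hQ2 [Q2Q1 sub2]]] := lL b (or_introl erefl) Q1 hQ1 PQ1.
have Q2Q1' := subseq_of_range hQ2 hQ1 Q2Q1.
exists Q2; split=> [|c [<-|hc] X]; [exact: subseq_of_trans Q2Q1' Q1Q|exact: sub2|].
by move/(F_spread_subseq Q2Q1')/(sub1 c hc).
Qed.

Lemma large_limit l FA P : is_limit lt l ->
  (forall d, lt d l -> large F d FA P) -> large F l FA P.
Proof.
move=> ll ld M hM PM.
(* [Ns k] serves every [F b] with [b] in [A l k]; a set of [F l] with minimum [k] lies in
   such an [F b], and from index [k] on the diagonal is a subsequence of [Ns k]. *)
pose good k Q := forall b, List.In b (A l k) -> fam_sub (fam_spread (F b) Q) FA.
have refine k Q : subseq_of Q M -> exists Q', subseq_of Q' Q /\ good k Q'.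
  exact: large_refine (fun b hb => ld b (tf_A_below HF ll hb)) hM PM Q.
have [Q0 [Q0M good0]] := refine 0 M (subseq_of_refl M).
have step k Q : subseq_of Q M /\ good k Q ->
    exists Q', (subseq_of Q' M /\ good k.+1 Q') /\ subseq_of Q' Q.
  move=> [QM _]; have [Q' [Q'Q g]] := refine k.+1 Q QM.
  by exists Q'; do 2!split=> //; apply: subseq_of_trans Q'Q QM.
have [Ns [_ hNs]] := dependent_choice (conj Q0M good0) step.
have hsi k : strict_incr (Ns k) := subseq_of_strict_incr (proj1 (proj1 (hNs k))) hM.
have [hD tail] := diagonal_subseq hsi (fun k => proj2 (hNs k)).
exists (fun i => Ns i i); split=> //; split=> [i|_ [E [FE ->]]].
  by have [[/subseq_of_mem NsM _] _] := hNs i; apply: NsM.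
case/(tf_limit HF ll): FE => [->|[_ [k [kE [kmin [b [hb Fb]]]]]]].
  case A0: (A l 0) (tf_A_nonempty HF ll (n := 0)) => [|b0 s0] // _.
  have [[_ g0] _] := hNs 0; rewrite imfset0; apply: (g0 b0); first by rewrite A0; left.
  by exists fset0; split; [apply: F_nil|rewrite imfset0].
have [s [hs sNs]] := tail k; have [[_ gk] _] := hNs k; apply: (gk b hb).
exists [fset s i | i in E]; split; first exact: F_spread.
by apply: imfset_subseq => i /kmin ki; rewrite sNs.
Qed.

Lemma large_join_succ a b g d s P : lt a b -> is_succ lt d s ->
  large F d (fam_join (F a) (F g)) P -> large F s (fam_join (F b) (F g)) P.
Proof.
move=> ab sd ld M hM PM; have [a' sa] := exists_succ HO a.
have [m hm] := F_succ_tail_subset ab sa; have [N [hN [NM sub]]] := ld M hM PM.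
exists (fun i => N (i + m)%N); split; first exact: strict_incr_shift.
split=> [i|_ [E [FE ->]]]; first exact: NM.
have Nm i : m <= N (i + m)%N := leq_trans (leq_addl _ _) (strict_incr_geq hN _).
case/(tf_succ HF sd): FE => [->|[n [E' [FE' ->]]]].
  by rewrite imfset0; exists fset0, fset0; rewrite fsetU0; do 2?split; try apply: F_nil.
have [E1 [E2 [F1 [F2 E12]]]] : fam_join (F a) (F g) [fset N (i + m)%N | i in E'].
  apply: sub; exists [fset (i + m)%N | i in E']; split; last exact: imfset_subseq.
  exact: F_spread (strict_incr_addn m) FE'.
exists (N (n + m)%N |` E1), E2; split; last by rewrite imfsetU1 E12 fsetUA.
apply: hm; first by apply/(tf_succ HF sa); right; exists (N (n + m)%N), E1.
move=> x /fset1UP [-> //|xE1].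
have : x \in [fset N (i + m)%N | i in E'] by rewrite E12 in_fsetU xE1.
by case/imfsetP => i _ ->.
Qed.

Lemma rank_ge_spread d N : strict_incr N -> rank_ge lt (fam_spread (F d) N) fset0 d.
Proof.
elim/(well_founded_ind (o_wf HO)): d N => d IH N hN.
have spread0 : fam_spread (F d) N fset0.
  by exists fset0; rewrite imfset0; split=> //; apply: F_nil.
apply: RankGe => // d' d'd k.
case: (ordinal_cases lt d) => [z|[[c sc]|l]]; first by case: (z d').
- exists (N k); split; first exact: strict_incr_geq.
  apply: (rank_ge_union HO); apply: (rank_ge_sub HO (FA := fam_spread (F c) N)).
    move=> _ [E [FE ->]]; exists (k |` E); rewrite imfsetU1; split=> //.
    by apply/(tf_succ HF sc); right; exists k, E.
  apply: (rank_ge_le HO (IH c (proj1 sc) N hN)).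
  by case: (olt_succ HO sc d'd) => [->|]; [right|left].
- have [n0 hn0] := tf_A_max_cvg HF l d'd; have [x [hx d'x]] := hn0 n0 (leqnn _).
  have sub := F_spread_shift (fun E => F_tail_subset_limit l hx (E := E)) hN.
  have rx := IH x (tf_A_below HF l hx) _ (strict_incr_shift n0 hN).
  exact: rank_ge_extend (rank_ge_sub HO sub rx) _ d'x k.
Qed.

Lemma large_lt_rank FA P c d : infinite_set P -> ~ rank_ge lt FA fset0 d ->
  large F c FA P -> lt c d.
Proof.
move=> /infinite_set_enum [M [hM PM]] nd /(_ M hM PM) [N [hN [_ sub]]].
have rc := rank_ge_sub HO sub (rank_ge_spread c hN).
case: (olt_total HO c d) => [//|dc]; case: nd; apply: (rank_ge_le HO rc).
by case: dc => [->|]; [right|left].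
Qed.

Lemma exists_largest_large FA P : FA fset0 ->
  (exists d, forall c, large F c FA P -> lt c d) ->
  exists l, large F l FA P /\ forall c, large F c FA P -> ole lt c l.
Proof.
move=> FA0 [d bd]; pose ub u := forall c, large F c FA P -> ole lt c u.
have [l [ubl lmin]] := exists_minimal HO (ex_intro ub d (fun c lc => or_introl (bd c lc))).
exists l; split=> //.
have above c : lt c l -> exists c', large F c' FA P /\ lt c c'.
  move=> cl; apply: NNPP => nc; apply: (lmin c _ cl) => c' lc'.
  case: (olt_total HO c' c) => [|[|cc']]; [by left|by right|].
  by case: nc; exists c'.
case: (ordinal_cases lt l) => [z|[[m sm]|ll]]; first exact: large_zero.
  have [c' [lc' mc']] := above m (proj1 sm).
  case: (ubl c' lc') => [c'l|<- //].
  by case: (olt_succ HO sm c'l) => [e|c'm]; [rewrite e in mc'|]; case: (olt_asym HO mc').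
apply: large_limit => // c cl; have [c' [lc' cc']] := above c cl.
exact: large_lt lc' cc'.
Qed.

End TransfiniteFamily.

Theorem proposition5p2 (O : Type) (lt : O -> O -> Prop) (HO : omega1_like lt)
    (A : O -> nat -> seq O) (F : O -> {fset nat} -> Prop)
    (HF : transfinite_family lt A F) (a b g : O) (hab : lt a b) :
  (exists m : nat,
     fam_sub (fam_join (fam_above (F a) m) (F g))
             (fam_join (fam_above (F b) m) (F g))) /\
  (forall N : nat -> Prop, infinite_set N ->
     exists x y : option O,
       is_index lt F (fam_join (F a) (F g)) N x /\
       is_index lt F (fam_join (F b) (F g)) N y /\
       ext_lt lt x y).
Proof.
split.
  have [m hm] := F_tail_subset HO HF hab; exists m.
  move=> _ [E1 [E2 [[F1 E1m] [F2 ->]]]]; exists E1, E2.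
  by do 2!split=> //; apply: hm.
move=> N hN; pose FA := fam_join (F a) (F g).
have hFA : hereditary FA := hereditary_join (F_hereditary HO HF) (F_hereditary HO HF).
have cFA : compact FA := compact_join (F_hereditary HO HF) (F_hereditary HO HF)
  (F_compact HO HF a) (F_compact HO HF g).
have FA0 : FA fset0.
  by exists fset0, fset0; rewrite fsetU0; split; [|split]; try apply: (F_nil HF).
have [d nd] := rank_bounded HO a hFA cFA.
have [l [ll lmax]] := exists_largest_large HO HF FA0
  (ex_intro _ d (fun c => large_lt_rank HO HF hN nd)).
have [s sl] := exists_succ HO l.
have [x hx] := exists_sup HO (fun c => large F c FA N).
have [y hy] := exists_sup HO (fun c => large F c (fam_join (F b) (F g)) N).
exists x, y; do 2!split=> //.
exact: sup_lt_succ hx hy lmax sl (large_join_succ HO HF hab sl ll).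
Qed.
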